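(* Let $d,e\in\mathbb{Z}^+$ with $e\in\{1,\dots,d-1\}$, let $B\subseteq\mathbb{R}^2$ and $D\subseteq B$. (i) If $\alpha_e(D)\ge0$, then there is $C\in\mathcal{C}_{\le e}$ with $\psi_e^{-1}(V_e(D))\subseteq C$. (ii) If $\beta_e(B,D)\ge -1$, then there is $C\in\mathcal{C}_{\le d-e}$ with $\psi_{d-e}^{-1}(W_e(B,D))\subseteq C$. (iii) If $|B|\le\binom{d+2}{2}-1$, then there is $C\in\mathcal{C}_{\le d}$ with $\psi_d^{-1}(V_d(B))\subseteq C$. (iv) If $|B|\le\binom{d+2}{2}-1$, then there are $C_1\in\mathcal{C}_{\le e}$, $C_2\in\mathcal{C}_{\le d-e}$, $C_3\in\mathcal{C}_{\le d}$ with $U_e(B,D)\subseteq C_1\cup C_2\cup C_3$.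
   Context: For $k\in\mathbb{Z}^+$, a curve of degree $k$ is the zero set in $\mathbb{R}^2$ of a polynomial in $\mathbb{R}[x,y]$ of degree exactly $k$; $\mathcal{C}_k$ is the family of such curves and $\mathcal{C}_{\le k}:=\bigcup_{j=1}^k\mathcal{C}_j$. For $k\in\mathbb{Z}^+$ let $I_k=\{(i,j)\in\mathbb{Z}_{\ge 0}^2: 1\le i+j\le k\}$ and $\psi_k:\mathbb{R}^2\to\mathbb{R}^{\binom{k+2}{2}-1}$, $\psi_k(a_1,a_2)=(a_1^ia_2^j)_{(i,j)\in I_k}$. A flat is an affine subspace; $\mathrm{Fl}(S)$ is the affine hull of $S$ ($\mathrm{Fl}(\emptyset)=\emptyset$, $\dim\emptyset=-1$). With $d$ fixed, for $e\in\{1,\dots,d-1\}$, $B\subseteq\mathbb{R}^2$, $D\subseteq B$: $V_e(D):=\mathrm{Fl}(\psi_e(D))\subseteq\mathbb{R}^{\binom{e+2}{2}-1}$; $W_e(B,D):=\mathrm{Fl}\big(\psi_{d-e}(B\setminus\psi_e^{-1}(V_e(D)))\big)\subseteq\mathbb{R}^{\binom{d-e+2}{2}-1}$; $\alpha_e(D):=\binom{e+2}{2}-2-\dim V_e(D)$; $\beta_e(B,D):=\binom{d-e+2}{2}-3-\dim W_e(B,D)$; and $U_e(B,D):=\psi_d^{-1}(V_d(B))$ if $\alpha_e(D)<0$; $U_e(B,D):=\psi_d^{-1}(V_d(B))\cup\psi_e^{-1}(V_e(D))$ if $\beta_e(B,D)<0\le\alpha_e(D)$; $U_e(B,D):=\psi_d^{-1}(V_d(B))\cup\psi_e^{-1}(V_e(D))\cup\psi_{d-e}^{-1}(W_e(B,D))$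 if $\alpha_e(D),\beta_e(B,D)\ge0$. Here $V_d(B):=\mathrm{Fl}(\psi_d(B))$. *)

From HB Require Import structures.
From mathcomp Require Import all_boot all_order all_algebra.
From mathcomp Require Import boolp reals.
From mathcomp Require Import mpoly.

Import Order.TTheory GRing.Theory Num.Theory.
Local Open Scope ring_scope.

Section Defs.
Context {R : realType}.

Definition Ik (k : nat) := {p : 'I_k.+1 * 'I_k.+1 | (0 < p.1 + p.2 <= k)%N}.

(* the ambient space R^{binom(k+2,2)-1}, with coordinates indexed by I_k *)
Notation Vk k := {ffun Ik k -> R^o}.

Definition psi (k : nat) (a : R * R) : Vk k :=
  [ffun p : Ik k => a.1 ^+ (val p).1 * a.2 ^+ (val p).2].

Definition Fl k (S : Vk k -> Prop) : Vk k -> Prop := fun x =>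
  exists n (p : 'I_n -> Vk k) (c : 'I_n -> R),
    (forall i, S (p i)) /\ \sum_i c i = 1 /\ x = \sum_i c i *: p i.

Definition lin_indep k n (v : 'I_n -> Vk k) : Prop :=
  forall c : 'I_n -> R, \sum_i c i *: v i = 0 -> forall i, c i = 0.

(* dimension of an affine flat F: -1 if F is empty, otherwise the dimension
   of its direction space {a - b | a, b in F} (= maximal size of a linearly
   independent family in it; such families have size <= #|{: Ik k}|) *)
Definition has_indep_dir k (F : Vk k -> Prop) (n : nat) : Prop :=
  exists v : 'I_n -> Vk k, lin_indep k n v /\
    forall i, exists a b, F a /\ F b /\ v i = a - b.

Definition dimF k (F : Vk k -> Prop) : int :=
  if `[< exists x, F x >] then
    ((\max_(n < #|{: Ik k}|.+1 | `[< has_indep_dir k F n >]) n)%N)%:Z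
  else -1.

Definition image_psi k (S : R * R -> Prop) : Vk k -> Prop :=
  fun y => exists a, S a /\ y = psi k a.

Definition preim_psi k (F : Vk k -> Prop) : R * R -> Prop :=
  fun a => F (psi k a).

Definition Vset e (D : R * R -> Prop) : Vk e -> Prop := Fl e (image_psi e D).

Definition Wset d e (B D : R * R -> Prop) : Vk (d - e) -> Prop :=
  Fl (d - e) (image_psi (d - e) (fun a => B a /\ ~ preim_psi e (Vset e D) a)).

Definition alpha e (D : R * R -> Prop) : int :=
  ('C(e + 2, 2))%:Z - 2 - dimF e (Vset e D).

Definition beta d e (B D : R * R -> Prop) : int :=
  ('C(d - e + 2, 2))%:Z - 3 - dimF (d - e) (Wset d e B D).

Definition Uset d e (B D : R * R -> Prop) : R * R -> Prop := fun a =>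
  if alpha e D < 0 then preim_psi d (Vset d B) a
  else if beta d e B D < 0 then
    preim_psi d (Vset d B) a \/ preim_psi e (Vset e D) a
  else preim_psi d (Vset d B) a \/ preim_psi e (Vset e D) a
       \/ preim_psi (d - e) (Wset d e B D) a.

Definition pt (a : R * R) : 'I_2 -> R := fun i => if val i == 0%N then a.1 else a.2.

Definition tdeg (p : {mpoly R[2]}) : nat := (msize p).-1.

Definition zeroset (p : {mpoly R[2]}) : R * R -> Prop := fun a => p.@[pt a] = 0.

Definition curve_of_deg (k : nat) (C : R * R -> Prop) : Prop :=
  exists p : {mpoly R[2]}, p != 0 /\ tdeg p = k /\ forall a, C a <-> zeroset p a.

Definition curve_le (k : nat) (C : R * R -> Prop) : Prop :=
  exists j, (1 <= j <= k)%N /\ curve_of_deg j C.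

Definition card_le (B : R * R -> Prop) (m : nat) : Prop :=
  exists s : seq (R * R), (size s <= m)%N /\ forall a, B a -> a \in s.

End Defs.

From HB Require Import structures.
From mathcomp Require Import all_boot all_order all_algebra.
From mathcomp Require Import boolp reals.
From mathcomp Require Import mpoly.
From mathcomp Require Import zify.

(* A polynomial of degree at most k is p = <w, psi_k> + c, with w its vector
   of non-constant coefficients, so psi_k^-1 of the hyperplane <w, x> + c = 0
   is the zero set of p, a curve of degree between 1 and k as soon as w != 0.
   A flat of dimension less than N = binom(k+2,2) - 1 in R^N lies in such a
   hyperplane: w is any nonzero vector orthogonal to a basis of its direction
   space.  The hypotheses of (i)-(iii) are exactly such dimension bounds (the
   affine hull of at most N points has dimension less than N), and (iv)
   combines them, with arbitrary curves in the degenerate cases of U_e. *)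

Set Implicit Arguments.
Unset Strict Implicit.
Unset Printing Implicit Defensive.

Import Order.TTheory GRing.Theory Num.Theory.
Local Open Scope ring_scope.

Lemma card_ord_pairs_sum_le (k : nat) :
  #|[pred p : 'I_k.+1 * 'I_k.+1 | (p.1 + p.2 <= k)%N]| = 'C(k.+2, 2).
Proof.
transitivity (\sum_(i < k.+1) \sum_(j < k.+1 | i + j <= k) 1)%N.
  by rewrite pair_big_dep sum1_card; apply: eq_card => -[i j].
transitivity (\sum_(i < k.+1) i.+1)%N.
  rewrite (reindex_inj rev_ord_inj) /=; apply: eq_bigr => i _.
  rewrite -[RHS]card_ord -sum1_card.
  rewrite (big_ord_widen_cond _ xpredT (fun _ => 1%N) (ltn_ord i)).
  by apply: eq_bigl => j /=; apply/idP/idP; have := ltn_ord i; lia.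
by rewrite -(bin2_sum k.+2) big_mkord [RHS]big_ord_recl.
Qed.

Lemma card_Ik (k : nat) : #|{: Ik k}| = ('C(k.+2, 2) - 1)%N.
Proof.
rewrite card_sig -card_ord_pairs_sum_le [in RHS](cardD1 (ord0, ord0)).
rewrite inE add1n subn1 /=.
apply: eq_card => -[i j]; rewrite !inE xpair_eqE -!val_eqE /=.
by case: (i : nat) => [|i']; case: (j : nat).
Qed.

Lemma card_Ik_gt0 (k : nat) : (0 < k)%N -> (0 < #|{: Ik k}|)%N.
Proof. by case: k => // k _; rewrite card_Ik !binS bin1 bin0; lia. Qed.

Lemma exists_free_spanning (K : fieldType) (vT : vectType K) (P : vT -> Prop) :
  exists X : seq vT,
    [/\ free X, forall x, x \in X -> P x & forall v, P v -> v \in <<X>>%VS].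
Proof.
pose has_free n := `[< exists X : seq vT,
  [/\ size X = n, free X & forall x, x \in X -> P x] >].
have has_free0 : exists n, has_free n.
  by exists 0%N; apply/asboolP; exists [::]; rewrite /free span_nil dimv0.
have has_free_le n : has_free n -> (n <= \dim {:vT})%N.
  by move=> /asboolP [X [<- /eqP <- _]]; apply/dimvS/subvf.
have [n /asboolP [X [sizeX freeX XP]] max_n] := ex_maxnP has_free0 has_free_le.
exists X; split => // v Pv; apply/idPn => vNX.
have /max_n : has_free n.+1.
  apply/asboolP; exists (v :: X); rewrite /= sizeX free_cons vNX freeX.
  by split => // x; rewrite inE => /predU1P [->|/XP].
by rewrite ltnn.
Qed.

Section AffineHull.
Variables (R : realType) (k : nat).
Local Notation V := {ffun Ik k -> R^o}.

Lemma dimVk : dim V = #|{: Ik k}|.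
Proof. by rewrite /dim /= muln1. Qed.

Lemma sub_Fl (S : V -> Prop) x : S x -> Fl k S x.
Proof.
by move=> Sx; exists 1%N, (fun _ => x), (fun _ => 1); rewrite !big_ord1 scale1r.
Qed.

Lemma Fl_empty (S : V -> Prop) x : (forall z, ~ S z) -> ~ Fl k S x.
Proof.
move=> noS [[|n] [p [c [Sp [c1 _]]]]]; last exact: (noS _ (Sp ord0)).
by move: c1; rewrite big_ord0 => /eqP; rewrite eq_sym oner_eq0.
Qed.

Lemma Fl_subr_mem (S : V -> Prop) s0 (U : {vspace V}) x :
  (forall z, S z -> z - s0 \in U) -> Fl k S x -> x - s0 \in U.
Proof.
move=> SU [n [p [c [Sp [c1 ->]]]]].
rewrite -[s0]scale1r -c1 scaler_suml -sumrB.
by apply: memv_suml => i _; rewrite -scalerBr memvZ ?SU.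
Qed.

Lemma lin_indep_free n (v : 'I_n -> V) :
  lin_indep k n v -> free [tuple v i | i < n].
Proof.
move=> indep_v; apply/freeP => c c0; apply: indep_v; rewrite -[RHS]c0.
by apply: eq_bigr => i _; rewrite -tnth_nth tnth_mktuple.
Qed.

Lemma free_lin_indep (X : seq V) : free X -> lin_indep k (size X) (nth 0 X).
Proof. exact: (@freeP _ _ _ (in_tuple X)). Qed.

Lemma has_indep_dir_Fl_le (S : V -> Prop) s0 (t : seq V) n :
  (forall z, S z -> z - s0 \in <<t>>%VS) ->
  has_indep_dir k (Fl k S) n -> (n <= size t)%N.
Proof.
move=> St [v [indep_v dir_v]].
rewrite -[n](size_tuple [tuple v i | i < n]) -(eqP (lin_indep_free indep_v)).
apply: leq_trans (dim_span t); apply/dimvS/span_subvP => _ /mapP [i _ ->].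
have [a [b [Fa [Fb ->]]]] := dir_v i.
have -> : a - b = (a - s0) - (b - s0) by rewrite opprB addrA subrK.
by apply: memvB; apply: Fl_subr_mem St _.
Qed.

Lemma lin_indep_le_card n (v : 'I_n -> V) :
  lin_indep k n v -> (n <= #|{: Ik k}|)%N.
Proof.
move=> /lin_indep_free /eqP; rewrite size_tuple => <-.
by rewrite -dimVk -dimvf; apply/dimvS/subvf.
Qed.

Lemma dimF_empty (F : V -> Prop) : ~ (exists x, F x) -> dimF k F = -1.
Proof. by move=> noF; rewrite /dimF asboolF. Qed.

Lemma dimF_ge (F : V -> Prop) n :
  (exists x, F x) -> has_indep_dir k F n -> n%:Z <= dimF k F.
Proof.
move=> Fx dir_n; rewrite /dimF asboolT // lez_nat.
have [v [indep_v _]] := dir_n.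
have n_small : (n < #|{: Ik k}|.+1)%N.
  by rewrite ltnS (lin_indep_le_card indep_v).
by apply: (leq_bigmax_cond (Ordinal n_small) (F := val)); apply/asboolP.
Qed.

Lemma dimF_Fl_le (S : V -> Prop) s0 (t : seq V) :
  (forall z, S z -> z - s0 \in <<t>>%VS) -> dimF k (Fl k S) <= (size t)%:Z.
Proof.
move=> St; rewrite /dimF; case: asboolP => // _.
rewrite lez_nat; apply/bigmax_leqP => n /asboolP.
exact: has_indep_dir_Fl_le St.
Qed.

Lemma dimF_Fl_lt_size (S : V -> Prop) (s : seq V) :
  (forall z, S z -> z \in s) -> dimF k (Fl k S) < (size s)%:Z.
Proof.
move=> Ss; have [[s0 Ss0]|noS] := pselect (exists z, S z); last first.
  rewrite dimF_empty // => -[x].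
  by apply: Fl_empty => z Sz; apply: noS; exists z.
apply: (@le_lt_trans _ _ (size [seq z - s0 | z <- rem s0 s])%:Z).
  apply: (dimF_Fl_le (s0 := s0)) => z Sz.
  have [->|zNs0] := eqVneq z s0; first by rewrite subrr mem0v.
  by apply/memv_span/map_f/rem_mem; rewrite ?Ss.
have s0s := Ss _ Ss0; rewrite size_map size_rem // ltz_nat ltn_predL.
by case: s {Ss} s0s.
Qed.

Definition dotv (w v : V) : R^o := \sum_q w q * v q.

Lemma dotv_is_linear w : linear (dotv w).
Proof.
move=> a u v; rewrite /dotv scaler_sumr -big_split; apply: eq_bigr => q _.
by rewrite !ffunE mulrDr mulrCA.
Qed.
HB.instance Definition _ w :=
  GRing.isLinear.Build R V R^o *:%R (dotv w) (dotv_is_linear w).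

Lemma dotvC w v : dotv w v = dotv v w.
Proof. by apply: eq_bigr => q _; rewrite mulrC. Qed.

Definition dotvs (X : seq V) (w : V) : {ffun 'I_(size X) -> R^o} :=
  [ffun i : 'I_(size X) => dotv X`_i w].

Lemma dotvs_is_linear X : linear (dotvs X).
Proof. by move=> a u v; apply/ffunP => i; rewrite !ffunE linearP. Qed.
HB.instance Definition _ X :=
  GRing.isLinear.Build R V _ *:%R (dotvs X) (dotvs_is_linear X).

Lemma exists_dotv_annihilator (X : seq V) : (size X < #|{: Ik k}|)%N ->
  exists2 w : V, w != 0 & forall x, x \in <<X>>%VS -> dotv w x = 0.
Proof.
move=> X_small; pose f := linfun (dotvs X).
have lker_gt0 : (0 < \dim (lker f))%N.
  have := limg_ker_dim f fullv; rewrite capfv dimvf dimVk.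
  have : (\dim (f @: fullv) <= size X)%N.
    by rewrite (leq_trans (dimvS (subvf _))) // dimvf /dim /= muln1 card_ord.
  lia.
exists (vpick (lker f)); first by rewrite vpick0 -dimv_eq0 -lt0n.
have /[!(memv_ker, lfunE)] /eqP /ffunP fX0 := memv_pick (lker f).
suff /subvP X_ker : (<<X>> <= lker (linfun (dotv (vpick (lker f)))))%VS.
  by move=> x /X_ker; rewrite memv_ker lfunE => /eqP.
apply/span_subvP => x xX; rewrite memv_ker lfunE /= dotvC.
have ix_lt : (index x X < size X)%N by rewrite index_mem.
by have := fX0 (Ordinal ix_lt); rewrite !ffunE nth_index // => ->.
Qed.

Lemma Fl_sub_hyperplane (S : V -> Prop) : (0 < k)%N ->
  dimF k (Fl k S) < #|{: Ik k}|%:Z ->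
  exists2 w : V, w != 0 & exists c, forall x, Fl k S x -> dotv w x = c.
Proof.
move=> k_gt0 Fl_small.
have [[s0 Ss0]|noS] := pselect (exists z, S z); last first.
  have [w w_neq0 _] := exists_dotv_annihilator (X := [::]) (card_Ik_gt0 k_gt0).
  exists w => //; exists 0 => x Fx; exfalso.
  by apply: Fl_empty Fx => z Sz; apply: noS; exists z.
have [X [freeX XS spanX]] :=
  exists_free_spanning (fun v => exists2 z, S z & v = z - s0).
have X_small : (size X < #|{: Ik k}|)%N.
  rewrite -ltz_nat; apply: le_lt_trans Fl_small; apply: dimF_ge.
    by exists s0; apply: sub_Fl.
  exists (nth 0 X); split => [|i]; first exact: free_lin_indep.
  have [z Sz ->] := XS _ (mem_nth 0 (ltn_ord i)).
  by exists z, s0; do !split; apply: sub_Fl.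
have [w w_neq0 wX] := exists_dotv_annihilator X_small.
exists w => //; exists (dotv w s0) => x Fx.
apply/eqP; rewrite -subr_eq0 -linearB.
by apply/eqP/wX; apply: Fl_subr_mem Fx => z Sz; apply: spanX; exists z.
Qed.

Definition Ik_mnm (q : Ik k) : 'X_{1..2} :=
  [multinom (if i == ord0 then val (val q).1 else val (val q).2) | i < 2].

Lemma mdeg_Ik_mnm q : mdeg (Ik_mnm q) = (val (val q).1 + val (val q).2)%N.
Proof. by rewrite mdegE big_ord_recl big_ord1 !mnmE. Qed.

Lemma Ik_mnm_eq0 q : (Ik_mnm q == 0%MM) = false.
Proof.
by apply/negbTE; rewrite -mdeg_eq0 mdeg_Ik_mnm -lt0n; case/andP: (valP q).
Qed.

Lemma Ik_mnm_inj : injective Ik_mnm.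
Proof.
move=> [[i1 j1] q1] [[i2 j2] q2].
move=> /(congr1 (fun m : 'X_{1..2} => (m ord0, m ord_max))); rewrite !mnmE /=.
by move=> -[/val_inj i12 /val_inj j12]; apply/val_inj; rewrite /= i12 j12.
Qed.

Definition hyperplane_mpoly (w : V) (c : R) : {mpoly R[2]} :=
  \sum_q w q *: 'X_[Ik_mnm q] + c%:MP.

Lemma meval_hyperplane_mpoly w c a :
  (hyperplane_mpoly w c).@[pt a] = dotv w (psi k a) + c.
Proof.
rewrite mevalD mevalC raddf_sum; congr (_ + _); apply: eq_bigr => q _.
by rewrite /= mevalZ mevalX big_ord_recl big_ord1 !mnmE ffunE.
Qed.

Lemma mcoeff_hyperplane_mpoly w c q :
  (hyperplane_mpoly w c)@_(Ik_mnm q) = w q.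
Proof.
rewrite mcoeffD mcoeffC Ik_mnm_eq0 mulr0 addr0 raddf_sum (bigD1 q) //=.
rewrite mcoeffZ mcoeffX eqxx mulr1 big1 ?addr0 // => q' q'Nq.
by rewrite mcoeffZ mcoeffX (inj_eq Ik_mnm_inj) (negbTE q'Nq) mulr0.
Qed.

Lemma msize_hyperplane_mpoly w c : (msize (hyperplane_mpoly w c) <= k.+1)%N.
Proof.
rewrite (leq_trans (msizeD_le _ _)) // geq_max msizeC; apply/andP; split.
  apply: leq_trans (msize_sum _ _ _) _; apply/bigmax_leqP => q _.
  rewrite (leq_trans (msizeZ_le _ _)) // msizeX mdeg_Ik_mnm ltnS.
  by case/andP: (valP q).
by case: (c != 0).
Qed.

Lemma curve_le_hyperplane_mpoly w c :
  w != 0 -> curve_le k (zeroset (hyperplane_mpoly w c)).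
Proof.
move=> w_neq0; pose p := hyperplane_mpoly w c.
have [q wq_neq0] : exists q, w q != 0.
  apply/existsP; apply: contraNT w_neq0 => /existsPn w0.
  by apply/eqP/ffunP => q; rewrite ffunE; apply/eqP/negPn.
have q_lt_size : (mdeg (Ik_mnm q) < msize p)%N.
  by apply: msize_mdeg_lt; rewrite mcoeff_msupp mcoeff_hyperplane_mpoly.
have q_gt0 : (0 < mdeg (Ik_mnm q))%N by rewrite lt0n mdeg_eq0 Ik_mnm_eq0.
have p_size : (msize p <= k.+1)%N := msize_hyperplane_mpoly w c.
exists (tdeg p); split; first by rewrite /tdeg; apply/andP; split; lia.
by exists p; split => //; rewrite -msize_poly_eq0; lia.
Qed.

Lemma curve_le_preim_Fl (S : V -> Prop) : (0 < k)%N ->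
  dimF k (Fl k S) <= 'C(k + 2, 2)%:Z - 2 ->
  exists C, curve_le k C /\ forall a, Fl k S (psi k a) -> C a.
Proof.
move=> k_gt0 Fl_small; have [w w_neq0 [c wc]] : exists2 w : V, w != 0 &
    exists c, forall x, Fl k S x -> dotv w x = c.
  by apply: Fl_sub_hyperplane; rewrite // card_Ik -addn2; lia.
exists (zeroset (hyperplane_mpoly w (- c))).
split; first exact: curve_le_hyperplane_mpoly.
by move=> a /wc; rewrite /zeroset meval_hyperplane_mpoly => ->; rewrite subrr.
Qed.

Lemma exists_curve_le : (0 < k)%N -> exists C : R * R -> Prop, curve_le k C.
Proof.
move=> k_gt0; have [|C [curveC _]] := @curve_le_preim_Fl (fun _ => False) k_gt0.
  rewrite dimF_empty => [|[x]]; last by apply: Fl_empty => _ [].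
  by have := bin_gt0 (k + 2) 2; lia.
by exists C.
Qed.

End AffineHull.

Theorem lemma21 (R : realType) (d e : nat) (B D : R * R -> Prop) :
  (1 <= e)%N -> (e <= d - 1)%N -> (forall a, D a -> B a) ->
  [/\ (0 <= alpha e D ->
         exists C, curve_le e C /\ forall a, preim_psi e (Vset e D) a -> C a),
      (-1 <= beta d e B D ->
         exists C, curve_le (d - e) C /\
           forall a, preim_psi (d - e) (Wset d e B D) a -> C a),
      (card_le B ('C(d + 2, 2) - 1) ->
         exists C, curve_le d C /\ forall a, preim_psi d (Vset d B) a -> C a)
    & (card_le B ('C(d + 2, 2) - 1) ->
         exists C1 C2 C3, [/\ curve_le e C1, curve_le (d - e) C2, curve_le d C3
           & forall a, Uset d e B D a -> C1 a \/ C2 a \/ C3 a])].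
Proof.
move=> e_gt0 e_le_d1 _; have d_e_gt0 : (0 < d - e)%N by lia.
have V_curve : 0 <= alpha e D ->
    exists C, curve_le e C /\ forall a, preim_psi e (Vset e D) a -> C a.
  by rewrite /alpha subr_ge0; apply: curve_le_preim_Fl.
have W_curve : -1 <= beta d e B D -> exists C, curve_le (d - e) C /\
    forall a, preim_psi (d - e) (Wset d e B D) a -> C a.
  by rewrite /beta /Wset => beta_ge; apply: curve_le_preim_Fl => //; lia.
have B_curve : card_le B ('C(d + 2, 2) - 1) ->
    exists C, curve_le d C /\ forall a, preim_psi d (Vset d B) a -> C a.
  move=> [s [size_s Bs]]; apply: curve_le_preim_Fl; first lia.
  have : dimF d (Fl d (image_psi d B)) < (size [seq psi d a | a <- s])%:Z.
    by apply: dimF_Fl_lt_size => _ [a [Ba ->]]; apply/map_f/Bs.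
  by rewrite size_map; have := bin_gt0 (d + 2) 2; lia.
split => // /B_curve [C3 [C3_curve C3_V]].
have [[C1 C1_curve] [C2 C2_curve]] :=
  (exists_curve_le R e_gt0, exists_curve_le R d_e_gt0).
rewrite /Uset; case: ltP => [_|/V_curve [C1' [C1'_curve C1'_V]]].
  by exists C1, C2, C3; split => // a; auto.
case: ltP => [_|/(le_trans (lerN10 _)) /W_curve [C2' [C2'_curve C2'_W]]].
  by exists C1', C2, C3; split => // a [/C3_V|/C1'_V]; auto.
by exists C1', C2', C3; split => // a [/C3_V|[/C1'_V|/C2'_W]]; auto.
Qed.
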